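(* Let $n\ge3$ and let $(c(t),\xi(t))$ be a $C^1$ solution of the Hamiltonian system below. Define $$l_3=\bar\xi_3+2c_1\bar\xi_4+\dots+(n-2)c_{n-3}\bar\xi_n .$$ Then (i) $\dot l_1=\bar l_2\,l_3$ and $\dot l_2=-\bar l_1\,l_3$; (ii) $|l_1|^2+|l_2|^2$ is constant in $t$, and consequently the energy $\frac12\bigl(|u_1|^2+|u_2|^2\bigr)$ with $u_1=\dot c_1$, $u_2=\dot c_2-2c_1\dot c_1$ (equivalently the Carnot–Carathéodory length of the tangent vector $\dot c=u_1L_1+u_2L_2$, with $L_1,L_2$ orthonormal) is conserved along the solution.
   Context: Complex-valued functions $c_1,\dots,c_n,\xi_1,\dots,\xi_n$ of a real variable $t$; $l_1=\bar\xi_1+2c_1\bar\xi_2+\dots+nc_{n-1}\bar\xi_n$, $l_2=\bar\xi_2+2c_1\bar\xi_3+\dots+(n-1)c_{n-2}\bar\xi_n$. The Hamiltonian system is $\dot c_1=\bar l_1$, $\dot c_2=2c_1\bar l_1+\bar l_2$, $\dot c_k=kc_{k-1}\bar l_1+(k-1)c_{k-2}\bar l_2$ ($k=3,\dots,n$), $\dot\xi_k=-(k+1)\xi_{k+1}l_1-(k+1)\xi_{k+2}l_2$ ($k=1,\dots,n-2$), $\dot\xi_{n-1}=-n\xi_nl_1$, $\dot\xi_n=0$. The vector fields are $L_j=\partial_j+\sum_{k=1}^{n-j}(k+1)c_k\partial_{j+k}$, $\partial_k=\partial/\partial c_k$. *)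

From Stdlib Require Import Reals.
From Coquelicot Require Import Coquelicot.
Open Scope R_scope.

(* Components are indexed by nat; only indices 1..n are meaningful. *)
Definition Cnat (k : nat) : C := RtoC (INR k).

Definition l1 (n : nat) (c xi : nat -> R -> C) (t : R) : C :=
  (Cconj (xi 1%nat t) +
   sum_n_m (fun k => Cnat k * c (k - 1)%nat t * Cconj (xi k t)) 2 n)%C.

Definition l2 (n : nat) (c xi : nat -> R -> C) (t : R) : C :=
  (Cconj (xi 2%nat t) +
   sum_n_m (fun k => Cnat (k - 1) * c (k - 2)%nat t * Cconj (xi k t)) 3 n)%C.

Definition l3 (n : nat) (c xi : nat -> R -> C) (t : R) : C :=
  (Cconj (xi 3%nat t) +
   sum_n_m (fun k => Cnat (k - 2) * c (k - 3)%nat t * Cconj (xi k t)) 4 n)%C.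

Definition inI (a b : Rbar) (t : R) : Prop := Rbar_lt a t /\ Rbar_lt t b.

Definition hamiltonian_C1_solution (n : nat) (a b : Rbar)
  (c xi dc dxi : nat -> R -> C) : Prop :=
  (forall k t, (1 <= k <= n)%nat -> inI a b t ->
     is_derive (c k) t (dc k t) /\ continuous (dc k) t /\
     is_derive (xi k) t (dxi k t) /\ continuous (dxi k) t) /\
  (forall t, inI a b t ->
     dc 1%nat t = Cconj (l1 n c xi t) /\
     dc 2%nat t = (Cnat 2 * c 1%nat t * Cconj (l1 n c xi t) + Cconj (l2 n c xi t))%C /\
     (forall k, (3 <= k <= n)%nat ->
        dc k t = (Cnat k * c (k - 1)%nat t * Cconj (l1 n c xi t)
                  + Cnat (k - 1) * c (k - 2)%nat t * Cconj (l2 n c xi t))%C) /\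
     (forall k, (1 <= k <= n - 2)%nat ->
        dxi k t = (- (Cnat (k + 1) * xi (k + 1)%nat t * l1 n c xi t)
                   - Cnat (k + 1) * xi (k + 2)%nat t * l2 n c xi t)%C) /\
     dxi (n - 1)%nat t = (- (Cnat n * xi n t * l1 n c xi t))%C /\
     dxi n t = RtoC 0).

(* With the conventions [c_0 = 1] and [xi_k = 0] for [k > n], every [l_j] is
   the single weighted sum [sum_k (k-j+1) c_{k-j} conj(xi_k)].  Differentiating
   along the Hamiltonian flow and summing by parts gives
   [l_j' = (1-j) conj(l_1) l_{j+1} + (2-j) conj(l_2) l_{j+2}], which for
   [j = 1, 2] is (i).  Then [(|l_1|^2 + |l_2|^2)' = 2 Re(conj(l_1) conj(l_2) l_3
   - conj(l_2) conj(l_1) l_3) = 0], and the energy is half this constant because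
   [u_1 = conj(l_1)] and [u_2 = conj(l_2)]. *)

From Stdlib Require Import Reals Lia Lra.
From Coquelicot Require Import Coquelicot.
Open Scope R_scope.

Lemma is_derive_fst (f : R -> C) (x : R) (l : C) :
  is_derive f x l -> is_derive (fun t => fst (f t)) x (fst l).
Proof.
  intros Hf. eapply filterdiff_ext_lin.
  - apply (filterdiff_comp' f fst x (fun y : R => scal y l) fst); [exact Hf|].
    apply filterdiff_linear, (@is_linear_fst R_AbsRing R_NormedModule R_NormedModule).
  - reflexivity.
Qed.

Lemma is_derive_snd (f : R -> C) (x : R) (l : C) :
  is_derive f x l -> is_derive (fun t => snd (f t)) x (snd l).
Proof.
  intros Hf. eapply filterdiff_ext_lin.
  - apply (filterdiff_comp' f snd x (fun y : R => scal y l) snd); [exact Hf|].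
    apply filterdiff_linear, (@is_linear_snd R_AbsRing R_NormedModule R_NormedModule).
  - reflexivity.
Qed.

Lemma is_derive_pair (f : R -> C) (x : R) (l : C) :
  is_derive (fun t => fst (f t)) x (fst l) -> is_derive (fun t => snd (f t)) x (snd l) ->
  is_derive f x l.
Proof.
  intros H1 H2.
  replace l with (plus (scal (fst l) (1, 0)) (scal (snd l) (0, 1)) : C)
    by (apply injective_projections; cbn -[Rmult Rplus]; ring).
  apply (is_derive_ext (fun t => plus (scal (fst (f t)) (1, 0)) (scal (snd (f t)) (0, 1)) : C)).
  - intros t. apply injective_projections; cbn -[Rmult Rplus]; ring.
  - apply (@is_derive_plus R_AbsRing C_R_NormedModule);
      apply (@is_derive_scal_l R_AbsRing C_R_NormedModule); assumption.
Qed.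

Lemma is_derive_Cmult (f g : R -> C) (x : R) (df dg : C) :
  is_derive f x df -> is_derive g x dg ->
  is_derive (fun t => (f t * g t)%C) x (df * g x + f x * dg)%C.
Proof.
  intros Hf Hg.
  apply is_derive_fst in Hf as Hf1; apply is_derive_snd in Hf as Hf2.
  apply is_derive_fst in Hg as Hg1; apply is_derive_snd in Hg as Hg2.
  apply is_derive_pair; cbn -[Rmult Rplus Rminus].
  - match goal with |- is_derive _ _ ?d =>
      replace d with ((fst df * fst (g x) + fst (f x) * fst dg)
                      - (snd df * snd (g x) + snd (f x) * snd dg)) by ring end.
    apply (is_derive_minus (fun t => fst (f t) * fst (g t)) (fun t => snd (f t) * snd (g t)));
      apply (is_derive_mult (K := R_AbsRing)); auto using Rmult_comm.
  - match goal with |- is_derive _ _ ?d =>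
      replace d with ((fst df * snd (g x) + fst (f x) * snd dg)
                      + (snd df * fst (g x) + snd (f x) * fst dg)) by ring end.
    apply (is_derive_plus (fun t => fst (f t) * snd (g t)) (fun t => snd (f t) * fst (g t)));
      apply (is_derive_mult (K := R_AbsRing)); auto using Rmult_comm.
Qed.

Lemma is_derive_Cconj (f : R -> C) (x : R) (df : C) :
  is_derive f x df -> is_derive (fun t => Cconj (f t)) x (Cconj df).
Proof.
  intros Hf. apply is_derive_pair; cbn.
  - exact (is_derive_fst f x df Hf).
  - exact (is_derive_opp _ x _ (is_derive_snd f x df Hf)).
Qed.

Lemma is_derive_Cconst (z : C) (x : R) : is_derive (fun _ : R => z) x (RtoC 0).
Proof. apply (@is_derive_const R_AbsRing C_R_NormedModule). Qed.

Lemma is_derive_Cmod_sq (f : R -> C) (x : R) (df : C) :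
  is_derive f x df ->
  is_derive (fun t => Cmod (f t) ^ 2) x (fst (df * Cconj (f x) + f x * Cconj df)%C).
Proof.
  intros Hf. apply (is_derive_ext (fun t => fst (f t * Cconj (f t))%C)).
  - intros t. now rewrite <- Cmod2_conj.
  - exact (is_derive_fst _ x _ (is_derive_Cmult _ _ x _ _ Hf (is_derive_Cconj f x df Hf))).
Qed.

Lemma inI_convex a b t s x :
  inI a b t -> inI a b s -> Rmin t s <= x <= Rmax t s -> inI a b x.
Proof.
  intros [Ht1 Ht2] [Hs1 Hs2] [H1 H2]. split.
  - apply Rbar_lt_le_trans with (Rmin t s); [|exact H1].
    unfold Rmin; destruct (Rle_dec t s); assumption.
  - apply Rbar_le_lt_trans with (Rmax t s); [exact H2|].
    unfold Rmax; destruct (Rle_dec t s); assumption.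
Qed.

Lemma is_derive_0_constant_on_inI (f : R -> R) a b :
  (forall x, inI a b x -> is_derive f x 0) ->
  forall t s, inI a b t -> inI a b s -> f t = f s.
Proof.
  intros Hd t s Ht Hs.
  assert (Hbetween : forall x, Rmin t s <= x <= Rmax t s -> inI a b x)
    by (intros x Hx; exact (inI_convex a b t s x Ht Hs Hx)).
  destruct (MVT_gen f t s (fun _ => 0)) as [y [_ Hy]].
  - intros x Hx. apply Hd, Hbetween. lra.
  - intros x Hx. apply continuity_pt_filterlim, (@ex_derive_continuous R_AbsRing R_NormedModule).
    exists 0. apply Hd, Hbetween, Hx.
  - lra.
Qed.

Lemma Cmod_sq_sum_constant (f g h : R -> C) a b :
  (forall t, inI a b t ->
     is_derive f t (Cconj (g t) * h t)%C /\ is_derive g t (- (Cconj (f t) * h t))%C) ->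
  forall t s, inI a b t -> inI a b s ->
    Cmod (f t) ^ 2 + Cmod (g t) ^ 2 = Cmod (f s) ^ 2 + Cmod (g s) ^ 2.
Proof.
  intros Hfg. apply (is_derive_0_constant_on_inI (fun t => Cmod (f t) ^ 2 + Cmod (g t) ^ 2)).
  intros x Hx. destruct (Hfg x Hx) as [Hf Hg].
  pose proof (is_derive_plus _ _ x _ _ (is_derive_Cmod_sq f x _ Hf) (is_derive_Cmod_sq g x _ Hg)) as H.
  match type of H with is_derive _ _ ?d => replace 0 with d; [exact H|] end.
  rewrite Copp_conj, !Cmult_conj, !Cconj_conj. cbn -[Rmult Rplus Rminus Ropp]. ring.
Qed.

(* [ring] fails on equations whose type is a Coquelicot structure projection
   reducing to [C]. *)
Ltac C_ring := match goal with |- ?x = ?y => change (@eq C x y) end; ring.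

Lemma Cnat_0 : Cnat 0 = 0%C.
Proof. reflexivity. Qed.

Lemma Cnat_S m : Cnat (S m) = (Cnat m + 1)%C.
Proof. unfold Cnat. now rewrite S_INR, RtoC_plus. Qed.

Lemma Cconj_RtoC (r : R) : Cconj (RtoC r) = RtoC r.
Proof. apply injective_projections; cbn; ring. Qed.

Lemma Cconj_Cnat k : Cconj (Cnat k) = Cnat k.
Proof. apply Cconj_RtoC. Qed.

Lemma Cnat_add m k : Cnat (m + k) = (Cnat m + Cnat k)%C.
Proof. unfold Cnat. now rewrite plus_INR, RtoC_plus. Qed.

(* [sum_{k=j}^N (k-j+1) p_{k-j} Y_k]: the weight [S k - j] vanishes for [k < j]. *)
Definition lsum (j N : nat) (p Y : nat -> C) : C :=
  sum_n (fun k => Cnat (S k - j) * p (k - j)%nat * Y k)%C N.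

(* The right-hand sides of the system for [c] and [conj xi], with [A = conj l_1]
   and [B = conj l_2]. *)
Definition dc_field (p : nat -> C) (A B : C) (i : nat) : C :=
  (Cnat i * p (i - 1)%nat * A + Cnat (i - 1) * p (i - 2)%nat * B)%C.

Definition dxibar_field (Y : nat -> C) (A B : C) (k : nat) : C :=
  (- (Cnat (S k) * (Y (S k) * A + Y (S (S k)) * B)))%C.

Lemma lsum_S j N p Y :
  lsum j (S N) p Y = (lsum j N p Y + Cnat (S (S N) - j) * p (S N - j)%nat * Y (S N))%C.
Proof. unfold lsum. now rewrite sum_Sn. Qed.

Lemma lsum_flow_derivative (j N : nat) (p Y : nat -> C) (A B : C) : (1 <= j)%nat ->
  (sum_n (fun k => Cnat (S k - j) *
            (dc_field p A B (k - j) * Y k + p (k - j)%nat * dxibar_field Y A B k))%C N : C)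
  = ((1 - Cnat j) * A * lsum (S j) N p Y + (2 - Cnat j) * B * lsum (S (S j)) N p Y
     - (A * Cnat (S N - j) * Cnat (S N) * p (N - j)%nat * Y (S N)
        + B * (Cnat (N - j) * Cnat N * p (N - j - 1)%nat * Y (S N)
               + Cnat (S N - j) * Cnat (S N) * p (N - j)%nat * Y (S (S N)))))%C.
Proof.
  intros Hj. induction N as [|N IH].
  - destruct j as [|j]; [lia|]. unfold lsum. rewrite !sum_O. cbn [Nat.sub]. rewrite Cnat_0. ring.
  - rewrite sum_Sn, IH, !lsum_S. change plus with Cplus.
    destruct (Nat.lt_ge_cases (S N) j) as [Hlt|Hge].
    + replace (S (S N) - j)%nat with 0%nat by lia. replace (S (S N) - S j)%nat with 0%nat by lia.
      replace (S (S N) - S (S j))%nat with 0%nat by lia. replace (S N - j)%nat with 0%nat by lia.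
      replace (N - j)%nat with 0%nat by lia. rewrite Cnat_0. ring.
    + destruct (S N - j)%nat as [|f] eqn:E.
      * replace (S (S N) - j)%nat with 1%nat by lia. replace (S (S N) - S j)%nat with 0%nat by lia.
        replace (S (S N) - S (S j))%nat with 0%nat by lia. replace (N - j)%nat with 0%nat by lia.
        replace (S N) with j by lia. unfold dc_field, dxibar_field. cbn [Nat.sub].
        rewrite !Cnat_S, Cnat_0. ring.
      * replace (S (S N) - j)%nat with (S (S f)) by lia. replace (S (S N) - S j)%nat with (S f) by lia.
        replace (S (S N) - S (S j))%nat with f by lia. replace (N - j)%nat with f by lia.
        replace (S N - j - 1)%nat with f by lia. replace (S N - S j)%nat with f by lia.
        replace (S N - S (S j))%nat with (f - 1)%nat by lia.
        replace N with (j + f)%nat by lia. unfold dc_field, dxibar_field. cbn [Nat.sub].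
        rewrite ?Nat.sub_0_r, ?Nat.add_succ_r, !Cnat_S, !Cnat_add. ring.
Qed.

Definition c_ext (c : nat -> R -> C) (t : R) (k : nat) : C :=
  match k with O => 1%C | _ => c k t end.

Definition xi_bar_ext (n : nat) (xi : nat -> R -> C) (t : R) (k : nat) : C :=
  if (k <=? n)%nat then Cconj (xi k t) else 0%C.

Definition lj (n j : nat) (c xi : nat -> R -> C) (t : R) : C :=
  lsum j n (c_ext c t) (xi_bar_ext n xi t).

Lemma xi_bar_ext_le n xi t k : (k <= n)%nat -> xi_bar_ext n xi t k = Cconj (xi k t).
Proof. intros Hk. unfold xi_bar_ext. now rewrite (proj2 (Nat.leb_le k n) Hk). Qed.

Lemma xi_bar_ext_gt n xi t k : (n < k)%nat -> xi_bar_ext n xi t k = 0%C.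
Proof. intros Hk. unfold xi_bar_ext. now rewrite (proj2 (Nat.leb_gt k n) Hk). Qed.

Lemma lj_expand n j c xi t : (1 <= j <= n)%nat ->
  lj n j c xi t
  = (Cconj (xi j t)
     + sum_n_m (fun k => Cnat (S k - j) * c (k - j)%nat t * Cconj (xi k t)) (S j) n)%C.
Proof.
  intros Hj. unfold lj, lsum, sum_n.
  rewrite (sum_n_m_Chasles _ 0 (j - 1) n) by lia.
  replace (S (j - 1)) with j by lia. rewrite (sum_Sn_m _ j n) by lia.
  rewrite (sum_n_m_ext_loc _ (fun _ => zero) 0 (j - 1)), sum_n_m_const_zero.
  2:{ intros k Hk. replace (S k - j)%nat with 0%nat by lia. rewrite Cnat_0.
      change (@zero C_AbelianMonoid) with (RtoC 0). C_ring. }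
  rewrite (sum_n_m_ext_loc _ (fun k => Cnat (S k - j) * c (k - j)%nat t * Cconj (xi k t))%C).
  2:{ intros k Hk. rewrite xi_bar_ext_le by lia.
      now replace (k - j)%nat with (S (k - S j)) by lia. }
  rewrite Nat.sub_diag, xi_bar_ext_le by lia. replace (S j - j)%nat with 1%nat by lia.
  change plus with Cplus. change (@zero C_AbelianMonoid) with (RtoC 0).
  cbn [c_ext]. rewrite Cnat_S, Cnat_0. C_ring.
Qed.

Section HamiltonianFlow.

Variables (n : nat) (a b : Rbar) (c xi dc dxi : nat -> R -> C).
Hypothesis Hsol : hamiltonian_C1_solution n a b c xi dc dxi.
Hypothesis Hn : (3 <= n)%nat.

Lemma l1_lj t : l1 n c xi t = lj n 1 c xi t.
Proof.
  rewrite lj_expand by lia. unfold l1. f_equal.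
  apply sum_n_m_ext. intros k. now replace (S k - 1)%nat with k by lia.
Qed.

Lemma l2_lj t : l2 n c xi t = lj n 2 c xi t.
Proof. rewrite lj_expand by lia. reflexivity. Qed.

Lemma l3_lj t : l3 n c xi t = lj n 3 c xi t.
Proof. rewrite lj_expand by lia. reflexivity. Qed.

Lemma is_derive_c_ext t i : inI a b t -> (i <= n)%nat ->
  is_derive (fun s => c_ext c s i) t
    (dc_field (c_ext c t) (Cconj (lj n 1 c xi t)) (Cconj (lj n 2 c xi t)) i).
Proof.
  intros Ht Hi. destruct Hsol as [Hder Hsys]. destruct (Hsys t Ht) as (E1 & E2 & E3 & _).
  rewrite <- l1_lj, <- l2_lj. unfold dc_field. destruct i as [|i].
  - cbn [Nat.sub]. rewrite Cnat_0, !Cmult_0_l, Cplus_0_l.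
    apply (is_derive_ext (fun _ : R => RtoC 1)); [reflexivity|apply is_derive_Cconst].
  - apply (is_derive_ext (c (S i))); [reflexivity|].
    match goal with |- is_derive _ _ ?d => replace d with (dc (S i) t) end.
    { apply Hder; [lia|exact Ht]. }
    destruct i as [|[|i]]; cbn [c_ext Nat.sub].
    + rewrite E1, Cnat_S, Cnat_0. ring.
    + rewrite E2, !Cnat_S, Cnat_0. ring.
    + rewrite E3 by lia. cbn [Nat.sub]. ring.
Qed.

Lemma is_derive_xi_bar_ext t k : inI a b t -> (1 <= k <= n)%nat ->
  is_derive (fun s => xi_bar_ext n xi s k) t
    (dxibar_field (xi_bar_ext n xi t) (Cconj (lj n 1 c xi t)) (Cconj (lj n 2 c xi t)) k).
Proof.
  intros Ht Hk. destruct Hsol as [Hder Hsys].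
  destruct (Hsys t Ht) as (_ & _ & _ & E4 & E5 & E6).
  apply (is_derive_ext (fun s => Cconj (xi k s))).
  { intros s. symmetry. apply xi_bar_ext_le. lia. }
  match goal with |- is_derive _ _ ?d => replace d with (Cconj (dxi k t)) end.
  { apply is_derive_Cconj, Hder; [lia|exact Ht]. }
  rewrite <- l1_lj, <- l2_lj. unfold dxibar_field.
  destruct (Nat.eq_dec k n) as [->|Hkn].
  { rewrite E6, !xi_bar_ext_gt, Cconj_RtoC by lia. ring. }
  destruct (Nat.eq_dec k (n - 1)) as [->|Hkn1].
  - replace (S (n - 1)) with n by lia.
    rewrite E5, xi_bar_ext_le, xi_bar_ext_gt by lia.
    rewrite Copp_conj, !Cmult_conj, Cconj_Cnat. ring.
  - rewrite E4 by lia. replace (k + 1)%nat with (S k) by lia. replace (k + 2)%nat with (S (S k)) by lia.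
    rewrite !xi_bar_ext_le by lia.
    rewrite Cminus_conj, Copp_conj, !Cmult_conj, Cconj_Cnat. ring.
Qed.

Lemma is_derive_lj j t : (1 <= j)%nat -> inI a b t ->
  is_derive (lj n j c xi) t
    ((1 - Cnat j) * Cconj (lj n 1 c xi t) * lj n (S j) c xi t
     + (2 - Cnat j) * Cconj (lj n 2 c xi t) * lj n (S (S j)) c xi t)%C.
Proof.
  intros Hj Ht.
  set (A := Cconj (lj n 1 c xi t)). set (B := Cconj (lj n 2 c xi t)).
  set (p := c_ext c t). set (Y := xi_bar_ext n xi t).
  assert (Hterm : forall k, (k <= n)%nat ->
    is_derive (fun s => Cnat (S k - j) * c_ext c s (k - j) * xi_bar_ext n xi s k)%C t
      (Cnat (S k - j) * (dc_field p A B (k - j) * Y k + p (k - j)%nat * dxibar_field Y A B k))%C).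
  { intros k Hk. destruct (Nat.lt_ge_cases k j) as [Hkj|Hkj].
    - replace (S k - j)%nat with 0%nat by lia. rewrite Cnat_0, Cmult_0_l.
      apply (is_derive_ext (fun _ : R => RtoC 0)); [intros s; C_ring|apply is_derive_Cconst].
    - pose proof (is_derive_Cmult _ _ t _ _ (is_derive_Cconst (Cnat (S k - j)) t)
                    (is_derive_c_ext t (k - j) Ht ltac:(lia))) as Hp.
      pose proof (is_derive_Cmult _ _ t _ _ Hp (is_derive_xi_bar_ext t k Ht ltac:(lia))) as H.
      cbv beta in H. fold p Y A B in H.
      match type of H with is_derive _ _ ?d => replace (Cnat _ * _)%C with d by ring end.
      exact H. }
  pose proof (is_derive_sum_n _ n t _ Hterm) as H.
  match goal with |- is_derive _ _ ?d => replace d with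
    (sum_n (fun k => Cnat (S k - j) *
              (dc_field p A B (k - j) * Y k + p (k - j)%nat * dxibar_field Y A B k))%C n : C) end.
  { exact H. }
  rewrite lsum_flow_derivative by exact Hj.
  unfold Y. rewrite !xi_bar_ext_gt by lia.
  unfold lj, p. ring.
Qed.

Lemma is_derive_l1 t : inI a b t ->
  is_derive (l1 n c xi) t (Cconj (l2 n c xi t) * l3 n c xi t)%C.
Proof.
  intros Ht. apply (is_derive_ext (lj n 1 c xi)); [intros s; symmetry; apply l1_lj|].
  match goal with |- is_derive _ _ ?d => replace d with
    ((1 - Cnat 1) * Cconj (lj n 1 c xi t) * lj n 2 c xi t
     + (2 - Cnat 1) * Cconj (lj n 2 c xi t) * lj n 3 c xi t)%C end.
  - apply is_derive_lj; [lia|exact Ht].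
  - rewrite <- l2_lj, <- l3_lj, Cnat_S, Cnat_0. ring.
Qed.

Lemma is_derive_l2 t : inI a b t ->
  is_derive (l2 n c xi) t (- (Cconj (l1 n c xi t) * l3 n c xi t))%C.
Proof.
  intros Ht. apply (is_derive_ext (lj n 2 c xi)); [intros s; symmetry; apply l2_lj|].
  match goal with |- is_derive _ _ ?d => replace d with
    ((1 - Cnat 2) * Cconj (lj n 1 c xi t) * lj n 3 c xi t
     + (2 - Cnat 2) * Cconj (lj n 2 c xi t) * lj n 4 c xi t)%C end.
  - apply is_derive_lj; [lia|exact Ht].
  - rewrite <- l1_lj, <- l3_lj, !Cnat_S, Cnat_0. ring.
Qed.

Lemma energy_Cmod_l1_l2 t : inI a b t ->
  Cmod (dc 1%nat t) ^ 2 + Cmod (dc 2%nat t - Cnat 2 * c 1%nat t * dc 1%nat t)%C ^ 2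
  = Cmod (l1 n c xi t) ^ 2 + Cmod (l2 n c xi t) ^ 2.
Proof.
  intros Ht. destruct Hsol as [_ Hsys]. destruct (Hsys t Ht) as (E1 & E2 & _).
  rewrite E2, E1.
  replace (_ - _)%C with (Cconj (l2 n c xi t)) by ring.
  now rewrite !Cmod_conj.
Qed.

End HamiltonianFlow.

Theorem proposition5 (n : nat) (a b : Rbar) (c xi dc dxi : nat -> R -> C) :
  (3 <= n)%nat ->
  hamiltonian_C1_solution n a b c xi dc dxi ->
  (* (i) *)
  (forall t, inI a b t ->
     is_derive (l1 n c xi) t (Cconj (l2 n c xi t) * l3 n c xi t)%C /\
     is_derive (l2 n c xi) t (- (Cconj (l1 n c xi t) * l3 n c xi t))%C) /\
  (* (ii) *)
  (forall t s, inI a b t -> inI a b s ->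
     (Cmod (l1 n c xi t))^2 + (Cmod (l2 n c xi t))^2
     = (Cmod (l1 n c xi s))^2 + (Cmod (l2 n c xi s))^2) /\
  (forall t s, inI a b t -> inI a b s ->
     / 2 * ((Cmod (dc 1%nat t))^2
            + (Cmod (dc 2%nat t - Cnat 2 * c 1%nat t * dc 1%nat t)%C)^2)
     = / 2 * ((Cmod (dc 1%nat s))^2
            + (Cmod (dc 2%nat s - Cnat 2 * c 1%nat s * dc 1%nat s)%C)^2)).
Proof.
  intros Hn Hsol.
  assert (Hi : forall t, inI a b t ->
     is_derive (l1 n c xi) t (Cconj (l2 n c xi t) * l3 n c xi t)%C /\
     is_derive (l2 n c xi) t (- (Cconj (l1 n c xi t) * l3 n c xi t))%C).
  { intros t Ht. split.
    - exact (is_derive_l1 n a b c xi dc dxi Hsol Hn t Ht).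
    - exact (is_derive_l2 n a b c xi dc dxi Hsol Hn t Ht). }
  pose proof (Cmod_sq_sum_constant _ _ _ a b Hi) as Hii.
  split; [exact Hi|split; [exact Hii|]].
  intros t s Ht Hs.
  rewrite (energy_Cmod_l1_l2 n a b c xi dc dxi Hsol t Ht), (energy_Cmod_l1_l2 n a b c xi dc dxi Hsol s Hs).
  now rewrite (Hii t s Ht Hs).
Qed.
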